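(* Let $M$ be a transitive model of set theory, suppose $M\models$ ''$\langle X,\tau\rangle$ and $\langle Y,\sigma\rangle$ are regular Hausdorff spaces and $f\colon X\to Y$ is continuous'', and let $\pi\colon X\to\hat X$ and $\chi\colon Y\to\hat Y$ be interpretations over $M$. Then: (1) there is a unique continuous function $\hat f\colon\hat X\to\hat Y$ which contains the set $\{\langle\pi(x),\chi(y)\rangle: x\in X,\ y\in Y,\ f(x)=y\}$ as a subfunction; (2) this $\hat f$ satisfies: whenever $O\in\tau$ and $P\in\sigma$ are such that $f^{-1}P=O$, then $\hat f^{-1}\chi(P)=\pi(O)$.
   Context: $M\subseteq V$ is a transitive model of ZFC; spaces are $T_0$. For $M\models$ ''$\langle X,\tau\rangle$ is a topological space'', a preinterpretation over $M$ is a space $\langle\hat X,\hat\tau\rangle$ with maps $\pi\colon X\to\hat X$, $\pi\colon\tau\to\hat\tau$ such that: $x\in O\iff\pi(x)\in\pi(O)$ for $x\in X,O\in\tau$; $\pi$ commutes with finite intersections and with arbitrary unions that exist in $M$ (if $M\models O=\bigcup_{i\in I}O_i$ then $\pi(O)=\bigcup_{i\in I}\pi(O_i)$); $\pi(\emptyset)=\emptyset$, $\pi(X)=\hat X$; and $\pi''\tau$ is a basis of $\hat\tau$. $\pi_0\le\pi_1$ if there is $h\colon\hat X_0\to\hat X_1$ with $\pi_1=h\circ\pi_0$ on points and $h^{-1}\pi_1(O)=\pi_0(O)$ for $O\in\tau$. An interpretation is a $\le$-largest preinterpretation. *)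

(* The ambient metatheory (Rocq + classical axioms) plays the
   role of the universe V.  The model M is a class M : U -> Prop of an
   abstract membership structure (U, mem), transitive w.r.t. mem and
   satisfying (the relativization of) every axiom of ZFC. *)
From Stdlib Require Import Classical.
Set Implicit Arguments.

Inductive form : Type :=
| fMem : nat -> nat -> form
| fEq  : nat -> nat -> form
| fNeg : form -> form
| fAnd : form -> form -> form
| fEx  : form -> form.

Definition scons {A : Type} (a : A) (e : nat -> A) : nat -> A :=
  fun n => match n with 0 => a | S k => e k end.

Section Model.
Variables (U : Type) (mem : U -> U -> Prop) (M : U -> Prop).

Fixpoint sat (e : nat -> U) (p : form) : Prop :=
  match p with
  | fMem i j => mem (e i) (e j)
  | fEq i j => e i = e j
  | fNeg q => ~ sat e q
  | fAnd q r => sat e q /\ sat e r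
  | fEx q => exists u, M u /\ sat (scons u e) q
  end.

Definition envM (e : nat -> U) : Prop := forall n, M (e n).

Definition transitive_class : Prop :=
  forall x y, M x -> mem y x -> M y.

Record ZFC_model : Prop := {
  zf_ext : forall a b, M a -> M b ->
      (forall z, M z -> (mem z a <-> mem z b)) -> a = b;
  zf_found : forall a, M a -> (exists x, M x /\ mem x a) ->
      exists x, M x /\ mem x a /\ forall z, M z -> mem z x -> ~ mem z a;
  zf_pair : forall a b, M a -> M b -> exists c, M c /\ mem a c /\ mem b c;
  zf_union : forall a, M a -> exists u, M u /\
      forall y z, M y -> M z -> mem y a -> mem z y -> mem z u;
  zf_power : forall a, M a -> exists p, M p /\
      forall x, M x -> (forall z, M z -> mem z x -> mem z a) -> mem x p;
  zf_inf : exists w, M w /\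
      (exists e, M e /\ mem e w /\ forall z, M z -> ~ mem z e) /\
      (forall x, M x -> mem x w -> exists s, M s /\ mem s w /\
          forall z, M z -> (mem z s <-> mem z x \/ z = x));
  zf_sep : forall (p : form) (e : nat -> U) a, envM e -> M a ->
      exists b, M b /\ forall x, M x -> (mem x b <-> mem x a /\ sat (scons x e) p);
  zf_repl : forall (p : form) (e : nat -> U) a, envM e -> M a ->
      (forall x, M x -> mem x a -> exists y, M y /\ sat (scons y (scons x e)) p /\
          forall y', M y' -> sat (scons y' (scons x e)) p -> y' = y) ->
      exists b, M b /\ forall x, M x -> mem x a ->
          exists y, M y /\ mem y b /\ sat (scons y (scons x e)) p;
  zf_choice : forall a, M a ->
      (forall x, M x -> mem x a -> exists z, M z /\ mem z x) ->
      (forall x y, M x -> M y -> mem x a -> mem y a -> x <> y ->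
          forall z, M z -> ~ (mem z x /\ mem z y)) ->
      exists c, M c /\ forall x, M x -> mem x a ->
          exists z, M z /\ mem z x /\ mem z c /\
            forall z', M z' -> mem z' x -> mem z' c -> z' = z
}.

Definition transitive_model_ZFC : Prop := transitive_class /\ ZFC_model.

(* ---------- notions inside M (written out; absolute by transitivity) ---------- *)
Definition M_topology (X tau : U) : Prop :=
  M X /\ M tau /\
  (forall O, mem O tau -> forall z, mem z O -> mem z X) /\
  mem X tau /\
  (exists E, mem E tau /\ forall z, ~ mem z E) /\
  (forall O1 O2, mem O1 tau -> mem O2 tau ->
     exists W, mem W tau /\ forall z, mem z W <-> mem z O1 /\ mem z O2) /\
  (forall F, M F -> (forall O, mem O F -> mem O tau) ->
     exists W, mem W tau /\ forall z, mem z W <-> exists O, mem O F /\ mem z O).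

Definition M_hausdorff (X tau : U) : Prop :=
  forall x y, mem x X -> mem y X -> x <> y ->
    exists A B, mem A tau /\ mem B tau /\ mem x A /\ mem y B /\
      forall z, ~ (mem z A /\ mem z B).

Definition M_regular (X tau : U) : Prop :=
  forall x O, mem x X -> mem O tau -> mem x O ->
    exists A B, mem A tau /\ mem B tau /\ mem x A /\
      (forall z, mem z X -> ~ mem z O -> mem z B) /\
      forall z, ~ (mem z A /\ mem z B).

Definition M_regular_hausdorff_space (X tau : U) : Prop :=
  M_topology X tau /\ M_hausdorff X tau /\ M_regular X tau.

Definition is_kpair (p a b : U) : Prop :=
  forall z, mem z p <->
    ((forall w, mem w z <-> w = a) \/ (forall w, mem w z <-> w = a \/ w = b)).

Definition fapp (f x y : U) : Prop := exists p, mem p f /\ is_kpair p x y.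

Definition M_function (f X Y : U) : Prop :=
  M f /\
  (forall p, mem p f -> exists a b, is_kpair p a b /\ mem a X /\ mem b Y) /\
  (forall a, mem a X -> exists b, mem b Y /\ fapp f a b /\
     forall b', fapp f a b' -> b' = b).

Definition preim_eq (f X O P : U) : Prop :=
  forall x, mem x O <-> mem x X /\ exists y, fapp f x y /\ mem y P.

Definition M_continuous (f X tau Y sigma : U) : Prop :=
  M_function f X Y /\
  forall P, mem P sigma -> exists O, mem O tau /\ preim_eq f X O P.

End Model.

Definition is_topology {T : Type} (t : (T -> Prop) -> Prop) : Prop :=
  t (fun _ => True) /\
  (forall A B, t A -> t B -> t (fun p => A p /\ B p)) /\
  (forall F : (T -> Prop) -> Prop, (forall A, F A -> t A) ->
      t (fun p => exists A, F A /\ A p)).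

Definition is_T0 {T : Type} (t : (T -> Prop) -> Prop) : Prop :=
  forall p q : T, p <> q -> exists A, t A /\ ~ (A p <-> A q).

Definition continuous_map {S T : Type} (s : (S -> Prop) -> Prop)
  (t : (T -> Prop) -> Prop) (g : S -> T) : Prop :=
  forall B, t B -> s (fun p => B (g p)).

Record Interp (U : Type) := {
  carrier : Type;
  topo : (carrier -> Prop) -> Prop;
  pi_pt : U -> carrier;            (* pi on points (only used on x in X) *)
  pi_op : U -> carrier -> Prop     (* pi on open sets (only used on O in tau) *)
}.

Section Interpretations.
Variables (U : Type) (mem : U -> U -> Prop) (M : U -> Prop) (X tau : U).

Definition preinterpretation (P : Interp U) : Prop :=
  is_topology (topo P) /\ is_T0 (topo P) /\
  (forall x O, mem x X -> mem O tau -> (mem x O <-> pi_op P O (pi_pt P x))) /\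
  (forall O1 O2 W, mem O1 tau -> mem O2 tau -> mem W tau ->
     (forall z, mem z W <-> mem z O1 /\ mem z O2) ->
     forall p, pi_op P W p <-> pi_op P O1 p /\ pi_op P O2 p) /\
  (forall F O, M F -> (forall Q, mem Q F -> mem Q tau) -> mem O tau ->
     (forall z, mem z O <-> exists Q, mem Q F /\ mem z Q) ->
     forall p, pi_op P O p <-> exists Q, mem Q F /\ pi_op P Q p) /\
  (forall E, mem E tau -> (forall z, ~ mem z E) -> forall p, ~ pi_op P E p) /\
  (forall p, pi_op P X p) /\
  (forall O, mem O tau -> topo P (pi_op P O)) /\
  (forall W, topo P W -> forall p, W p ->
     exists O, mem O tau /\ pi_op P O p /\ forall q, pi_op P O q -> W q).

Definition interp_le (P0 P1 : Interp U) : Prop :=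
  exists h : carrier P0 -> carrier P1,
    (forall x, mem x X -> pi_pt P1 x = h (pi_pt P0 x)) /\
    (forall O, mem O tau -> forall p, pi_op P1 O (h p) <-> pi_op P0 O p).

Definition interpretation (P : Interp U) : Prop :=
  preinterpretation P /\
  forall Q : Interp U, preinterpretation Q -> interp_le Q P.

End Interpretations.

From Stdlib Require Import Classical Setoid FunctionalExtensionality PropExtensionality ProofIrrelevance.

(* Points of an interpretation of Y realize every prime filter of sigma that is
   complete for the unions existing in M: the space of all such filters is itself a
   preinterpretation, so maximality maps it into the interpretation.  For a point p
   of the interpretation of X, the opens P with p in pi(f^-1 P) form such a filter:
   preimages commute with meets, and with unions in M because separation puts the
   family of preimages of a family in M back into M.  Sending p to the point realizing
   this filter gives fh with fh^-1 chi(P) = pi(f^-1 P), whence continuity and the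
   extension property.  Uniqueness holds since pi''X is dense and the interpretation
   of Y is Hausdorff: T0 together with regularity in M separates points. *)

Set Implicit Arguments.

Definition fOr p q := fNeg (fAnd (fNeg p) (fNeg q)).
Definition fImp p q := fNeg (fAnd p (fNeg q)).
Definition fIff p q := fAnd (fImp p q) (fImp q p).
Definition fAll p := fNeg (fEx (fNeg p)).

Section Relativization.
Variables (U : Type) (mem : U -> U -> Prop) (M : U -> Prop).

Lemma sat_or e p q : sat mem M e (fOr p q) <-> sat mem M e p \/ sat mem M e q.
Proof. cbn; tauto. Qed.

Lemma sat_imp e p q : sat mem M e (fImp p q) <-> (sat mem M e p -> sat mem M e q).
Proof. cbn; tauto. Qed.

Lemma sat_iff e p q : sat mem M e (fIff p q) <-> (sat mem M e p <-> sat mem M e q).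
Proof. cbn; tauto. Qed.

Lemma sat_all e p : sat mem M e (fAll p) <-> forall u, M u -> sat mem M (scons u e) p.
Proof.
  cbn; split.
  - intros H u Mu; apply NNPP; eauto.
  - intros H [u [Mu Hu]]; auto.
Qed.

Definition kpairM (p a b : U) : Prop :=
  forall u, M u -> (mem u p <->
    (forall w, M w -> (mem w u <-> w = a)) \/
    (forall w, M w -> (mem w u <-> w = a \/ w = b))).

Definition fappM (f x y : U) : Prop := exists p, M p /\ mem p f /\ kpairM p x y.

Definition preimM (f X O P : U) : Prop :=
  forall x, M x -> (mem x O <-> mem x X /\ exists y, M y /\ fappM f x y /\ mem y P).

End Relativization.

Definition fKpair p a b :=
  fAll (fIff (fMem 0 (S p))
    (fOr (fAll (fIff (fMem 0 1) (fEq 0 (S (S a)))))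
         (fAll (fIff (fMem 0 1) (fOr (fEq 0 (S (S a))) (fEq 0 (S (S b)))))))).

Definition fFapp f x y := fEx (fAnd (fMem 0 (S f)) (fKpair 0 (S x) (S y))).

Definition fPreim f X O P :=
  fAll (fIff (fMem 0 (S O))
    (fAnd (fMem 0 (S X)) (fEx (fAnd (fFapp (S (S f)) 1 0) (fMem 0 (S (S P))))))).

Ltac sat_simpl :=
  repeat first
    [ progress cbn -[fOr fImp fIff fAll fFapp fPreim]
    | setoid_rewrite sat_or | setoid_rewrite sat_imp
    | setoid_rewrite sat_iff | setoid_rewrite sat_all ].

Section FormulaSemantics.
Variables (U : Type) (mem : U -> U -> Prop) (M : U -> Prop).

Lemma sat_fFapp e f x y :
  sat mem M e (fFapp f x y) <-> fappM mem M (e f) (e x) (e y).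
Proof. unfold fFapp; sat_simpl; reflexivity. Qed.

Lemma sat_fPreim e f X O P :
  sat mem M e (fPreim f X O P) <-> preimM mem M (e f) (e X) (e O) (e P).
Proof. unfold fPreim; sat_simpl; setoid_rewrite sat_fFapp; reflexivity. Qed.

End FormulaSemantics.

(** * Absoluteness for a transitive model *)

Section Absoluteness.
Variables (U : Type) (mem : U -> U -> Prop) (M : U -> Prop).
Hypothesis HM : transitive_model_ZFC mem M.

Lemma M_elem {x y} : M x -> mem y x -> M y.
Proof. exact (proj1 HM x y). Qed.

Lemma M_separation (p : form) (Phi : U -> Prop) {e a} :
  envM M e -> M a -> (forall x, M x -> (sat mem M (scons x e) p <-> Phi x)) ->
  exists b, M b /\ forall x, mem x b <-> mem x a /\ Phi x.
Proof.
  intros He Ma HPhi.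
  destruct (zf_sep (proj2 HM) p a He Ma) as [b [Mb Hb]].
  exists b; split; [exact Mb|]; intro x; split.
  - intro xb; pose proof (M_elem Mb xb) as Mx.
    rewrite <- HPhi; [apply Hb|]; auto.
  - intros [xa Hx]; pose proof (M_elem Ma xa) as Mx.
    apply Hb; [|rewrite HPhi]; auto.
Qed.

Lemma M_pair {a b} : M a -> M b ->
  exists s, M s /\ forall w, mem w s <-> w = a \/ w = b.
Proof.
  intros Ma Mb.
  destruct (zf_pair (proj2 HM) a b Ma Mb) as [c [Mc [ac bc]]].
  destruct (M_separation (fOr (fEq 0 1) (fEq 0 2)) (fun w => w = a \/ w = b)
              (e := scons a (scons b (fun _ => a))) ltac:(intros [|[|n]]; cbn; auto) Mc)
    as [s [Ms Hs]].
  - intros x _; rewrite sat_or; reflexivity.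
  - exists s; split; [exact Ms|]; intro w; rewrite Hs.
    split; [tauto|]; intros [-> | ->]; auto.
Qed.

Lemma is_kpair_kpairM {p a b} : M a -> M b -> is_kpair mem p a b -> kpairM mem M p a b.
Proof.
  intros Ma Mb Hp u Mu; rewrite (Hp u).
  assert (Hw : forall w, mem w u -> M w) by (intros w; apply M_elem; exact Mu).
  split; intros [H | H]; [left | right | left | right]; intros w.
  - intros _; apply H.
  - intros _; apply H.
  - split; [intro wu; apply H; auto | intros ->; apply H; auto].
  - split; [intro wu; apply H; auto | intros [-> | ->]; apply H; auto].
Qed.

(* The pairs [{a}], [{a,b}] and [{z,y}] exist in [M], so a relativized Kuratowski pair is the genuine one. *)
Lemma kpairM_components {p a b z y} : M a -> M b -> M z -> M y ->
  is_kpair mem p a b -> kpairM mem M p z y -> z = a /\ y = b.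
Proof.
  intros Ma Mb Mz My Hp HpM.
  destruct (M_pair Ma Ma) as [sa [Msa Hsa]].
  destruct (M_pair Ma Mb) as [sab [Msab Hsab]].
  destruct (M_pair Mz My) as [szy [Mszy Hszy]].
  assert (za : z = a).
  { assert (sap : mem sa p) by (apply Hp; left; intro w; rewrite Hsa; tauto).
    apply HpM in sap as [H | H]; auto.
    - symmetry; apply H, Hsa; auto.
    - destruct (proj1 (Hsa z) (proj2 (H z Mz) (or_introl eq_refl))); assumption. }
  subst z.
  assert (Hb : b = a \/ b = y).
  { assert (sabp : mem sab p) by (apply Hp; right; intro w; rewrite Hsab; tauto).
    apply HpM in sabp as [H | H]; auto.
    - left; apply H, Hsab; auto.
    - apply H, Hsab; auto. }
  assert (Hy : y = a \/ y = b).
  { assert (szyp : mem szy p) by (apply HpM; auto; right; intros w _; apply Hszy).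
    apply Hp in szyp as [H | H].
    - left; apply H, Hszy; auto.
    - apply H, Hszy; auto. }
  split; [reflexivity|]; destruct Hb, Hy; congruence.
Qed.

Lemma fappM_fapp {f X Y x y} : M X -> M Y -> M_function mem M f X Y -> M x -> M y ->
  (fappM mem M f x y <-> fapp mem f x y).
Proof.
  intros MX MY [Mf [Hpairs _]] Mx My; split.
  - intros [p [Mp [pf HpM]]].
    destruct (Hpairs p pf) as [a [b [Hp [aX bY]]]].
    destruct (kpairM_components (M_elem MX aX) (M_elem MY bY) Mx My Hp HpM) as [-> ->].
    exists p; auto.
  - intros [p [pf Hp]].
    exists p; split; [exact (M_elem Mf pf)|]; split; [exact pf|].
    apply is_kpair_kpairM; assumption.
Qed.

Lemma preimM_preim_eq {f X Y O P} : M X -> M Y -> M O -> M P -> M_function mem M f X Y ->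
  (preimM mem M f X O P <-> preim_eq mem f X O P).
Proof.
  intros MX MY MO MP Hf.
  assert (Himg : forall x, M x ->
    ((exists y, M y /\ fappM mem M f x y /\ mem y P) <-> exists y, fapp mem f x y /\ mem y P)).
  { intros x Mx; split.
    - intros [y [My [fxy yP]]]; exists y; rewrite <- (fappM_fapp MX MY Hf Mx My); auto.
    - intros [y [fxy yP]]; pose proof (M_elem MP yP) as My.
      exists y; rewrite (fappM_fapp MX MY Hf Mx My); auto. }
  split.
  - intros H x; destruct (classic (M x)) as [Mx | nMx].
    + rewrite (H x Mx), (Himg x Mx); reflexivity.
    + split; [intro xO | intros [xX _]]; exfalso; apply nMx;
        [exact (M_elem MO xO) | exact (M_elem MX xX)].
  - intros H x Mx; rewrite (H x), (Himg x Mx); reflexivity.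
Qed.

End Absoluteness.

Section ModelTopology.
Variables (U : Type) (mem : U -> U -> Prop) (M : U -> Prop).
Hypothesis HM : transitive_model_ZFC mem M.
Variables (X tau : U).
Hypothesis HX : M_topology mem M X tau.

Lemma open_M {O} : mem O tau -> M O.
Proof. destruct HX as [_ [Mtau _]]; exact (M_elem HM Mtau). Qed.

Lemma open_sub {O z} : mem O tau -> mem z O -> mem z X.
Proof. destruct HX as [_ [_ [Hsub _]]]; intro HO; exact (Hsub O HO z). Qed.

(* The closure of [A] lies inside [P]. *)
Definition regular_core (P A : U) : Prop :=
  exists B, mem B tau /\ (forall z, mem z X -> mem z P \/ mem z B) /\
    forall z, ~ (mem z A /\ mem z B).

(* [regular_core P A] in the environment 0 = A, 1 = tau, 2 = X, 3 = P. *)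
Definition fRegularCore :=
  fEx (fAnd (fMem 0 2)
    (fAnd (fAll (fImp (fMem 0 4) (fOr (fMem 0 5) (fMem 0 1))))
          (fAll (fNeg (fAnd (fMem 0 2) (fMem 0 1)))))).

Lemma regular_core_family {P} : M_regular mem X tau -> mem P tau ->
  exists F, M F /\ (forall A, mem A F <-> mem A tau /\ regular_core P A) /\
    forall z, mem z P <-> exists A, mem A F /\ mem z A.
Proof.
  intros HR HP.
  destruct HX as [MX [Mtau _]].
  destruct (M_separation HM fRegularCore (regular_core P)
              (e := scons tau (scons X (scons P (fun _ => X))))
              ltac:(intros [|[|[|n]]]; cbn; auto using open_M) Mtau) as [F [MF HF]].
  - intros A MA; unfold fRegularCore, regular_core; sat_simpl; split.
    + intros [B [MB [HB [Hcov Hdisj]]]]; exists B; split; [exact HB|]; split.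
      * intros z zX; exact (Hcov z (M_elem HM MX zX) zX).
      * intros z; destruct (classic (M z)) as [Mz | nMz]; [exact (Hdisj z Mz)|].
        intros [zA _]; exact (nMz (M_elem HM MA zA)).
    + intros [B [HB [Hcov Hdisj]]]; exists B.
      split; [exact (open_M HB)|]; split; [exact HB|]; split.
      * intros z _; exact (Hcov z).
      * intros z _; exact (Hdisj z).
  - exists F; split; [exact MF|]; split; [exact HF|].
    intro z; split.
    + intro zP.
      destruct (HR z P (open_sub HP zP) HP zP) as [A [B [HA [HB [zA [Hcov Hdisj]]]]]].
      exists A; split; [|exact zA].
      apply HF; split; [exact HA|]; exists B; split; [exact HB|]; split; [|exact Hdisj].
      intros y yX; destruct (classic (mem y P)); auto.
    + intros [A [AF zA]].
      apply HF in AF as [HA [B [HB [Hcov Hdisj]]]].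
      destruct (Hcov z (open_sub HA zA)) as [zP | zB]; [exact zP|].
      exfalso; exact (Hdisj z (conj zA zB)).
Qed.

Variables (Y sigma f : U).
Hypothesis HY : M_topology mem M Y sigma.
Hypothesis Hf : M_continuous mem M f X tau Y sigma.

Lemma f_value {x} : mem x X -> exists y, mem y Y /\ fapp mem f x y /\
  forall y', fapp mem f x y' -> y' = y.
Proof. destruct Hf as [[_ [_ Htot]] _]; exact (Htot x). Qed.

Lemma preim_exists {P} : mem P sigma -> exists O, mem O tau /\ preim_eq mem f X O P.
Proof. destruct Hf as [_ Hcont]; exact (Hcont P). Qed.

Lemma preim_unique O O' P : mem O tau -> mem O' tau ->
  preim_eq mem f X O P -> preim_eq mem f X O' P -> O = O'.
Proof.
  intros HO HO' H H'.
  apply (zf_ext (proj2 HM) O O' (open_M HO) (open_M HO')).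
  intros z _; rewrite (H z), (H' z); reflexivity.
Qed.

Lemma preim_whole : preim_eq mem f X X Y.
Proof.
  intro x; split; [|tauto]; intro xX; split; [exact xX|].
  destruct (f_value xX) as [y [yY [fxy _]]]; exists y; auto.
Qed.

Lemma preim_empty O E : preim_eq mem f X O E -> (forall z, ~ mem z E) ->
  forall z, ~ mem z O.
Proof. intros H HE z zO; apply H in zO as [_ [y [_ yE]]]; exact (HE y yE). Qed.

Lemma preim_meet O1 O2 W' P1 P2 W :
  preim_eq mem f X O1 P1 -> preim_eq mem f X O2 P2 -> preim_eq mem f X W' W ->
  (forall z, mem z W <-> mem z P1 /\ mem z P2) ->
  forall z, mem z W' <-> mem z O1 /\ mem z O2.
Proof.
  intros H1 H2 H HW z; rewrite (H1 z), (H2 z), (H z); split.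
  - intros [zX [y [fzy yW]]]; apply HW in yW as [yP1 yP2].
    split; split; eauto.
  - intros [[zX [y1 [f1 y1P]]] [_ [y2 [f2 y2P]]]].
    destruct (f_value zX) as [y [_ [_ Huniq]]].
    pose proof (Huniq y1 f1) as ->; pose proof (Huniq y2 f2) as ->.
    split; [exact zX|]; exists y; split; [exact f1|]; apply HW; auto.
Qed.

Lemma preimage_family {F} : M F -> (forall Q, mem Q F -> mem Q sigma) ->
  exists G, M G /\ forall O, mem O G <->
    mem O tau /\ exists Q, mem Q F /\ preim_eq mem f X O Q.
Proof.
  intros MF HF.
  destruct HX as [MX [Mtau _]]; destruct HY as [MY _].
  destruct Hf as [Hfun _]; pose proof (proj1 Hfun) as Mf.
  (* Environment: 0 = O, 1 = F, 2 = f, 3 = X. *)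
  apply (M_separation HM (fEx (fAnd (fMem 0 2) (fPreim 3 4 1 0))) _
           (e := scons F (scons f (scons X (fun _ => X))))
           ltac:(intros [|[|[|n]]]; cbn; auto) Mtau).
  intros O MO; cbn -[fPreim]; setoid_rewrite sat_fPreim; cbn.
  split; intros [Q HQ].
  - exists Q; rewrite <- (preimM_preim_eq HM MX MY MO (proj1 HQ) Hfun); tauto.
  - pose proof (M_elem HM MF (proj1 HQ)) as MQ.
    exists Q; rewrite (preimM_preim_eq HM MX MY MO MQ Hfun); tauto.
Qed.

Lemma preim_bigcup {F G O O'} :
  (forall O, mem O G <-> mem O tau /\ exists Q, mem Q F /\ preim_eq mem f X O Q) ->
  (forall Q, mem Q F -> mem Q sigma) ->
  (forall z, mem z O <-> exists Q, mem Q F /\ mem z Q) ->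
  preim_eq mem f X O' O ->
  forall z, mem z O' <-> exists O'', mem O'' G /\ mem z O''.
Proof.
  intros HG HF HO H' z; rewrite (H' z); split.
  - intros [zX [y [fzy yO]]]; apply HO in yO as [Q [QF yQ]].
    destruct (preim_exists (HF Q QF)) as [O'' [HO'' HQ]].
    exists O''; split; [apply HG; eauto|]; apply HQ; eauto.
  - intros [O'' [HG'' zO'']]; apply HG in HG'' as [HO'' [Q [QF HQ]]].
    apply HQ in zO'' as [zX [y [fzy yQ]]].
    split; [exact zX|]; exists y; split; [exact fzy|]; apply HO; eauto.
Qed.

End ModelTopology.

Definition is_hausdorff {T : Type} (t : (T -> Prop) -> Prop) : Prop :=
  forall p q, p <> q -> exists A B, t A /\ t B /\ A p /\ B q /\ forall r, ~ (A r /\ B r).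

Lemma open_of_locally_open {T : Type} (t : (T -> Prop) -> Prop) (W : T -> Prop) :
  is_topology t -> (forall p, W p -> exists A, t A /\ A p /\ forall q, A q -> W q) -> t W.
Proof.
  intros [_ [_ Hunion]] Hloc.
  replace W with (fun p => exists A, (t A /\ forall q, A q -> W q) /\ A p).
  - apply Hunion; intros A [HA _]; exact HA.
  - apply functional_extensionality; intro p; apply propositional_extensionality; split.
    + intros [A [[_ AW] Ap]]; exact (AW p Ap).
    + intro Wp; destruct (Hloc p Wp) as [A [HA [Ap AW]]]; exists A; auto.
Qed.

Lemma continuous_eq_on_dense {S T : Type} (s : (S -> Prop) -> Prop) (t : (T -> Prop) -> Prop)
  (D : S -> Prop) (g h : S -> T) :
  is_topology s -> is_hausdorff t -> continuous_map s t g -> continuous_map s t h ->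
  (forall W, s W -> forall p, W p -> exists d, D d /\ W d) ->
  (forall d, D d -> g d = h d) -> g = h.
Proof.
  intros [_ [Hmeet _]] Ht Hg Hh Hdense Hagree.
  apply functional_extensionality; intro p; apply NNPP; intro Hne.
  destruct (Ht _ _ Hne) as [A [B [HA [HB [Ap [Bp Hdisj]]]]]].
  destruct (Hdense _ (Hmeet _ _ (Hg A HA) (Hh B HB)) p (conj Ap Bp)) as [d [Dd [Ad Bd]]].
  rewrite (Hagree d Dd) in Ad; exact (Hdisj _ (conj Ad Bd)).
Qed.

Section Preinterpretation.
Variables (U : Type) (mem : U -> U -> Prop) (M : U -> Prop) (X tau : U) (P : Interp U).
Hypothesis HP : preinterpretation mem M X tau P.

Lemma pi_topology : is_topology (topo P).
Proof. apply HP. Qed.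

Lemma pi_mem {x O} : mem x X -> mem O tau -> (mem x O <-> pi_op P O (pi_pt P x)).
Proof. apply HP. Qed.

Lemma pi_meet {O1 O2 W} : mem O1 tau -> mem O2 tau -> mem W tau ->
  (forall z, mem z W <-> mem z O1 /\ mem z O2) ->
  forall p, pi_op P W p <-> pi_op P O1 p /\ pi_op P O2 p.
Proof. apply HP. Qed.

Lemma pi_join {F O} : M F -> (forall Q, mem Q F -> mem Q tau) -> mem O tau ->
  (forall z, mem z O <-> exists Q, mem Q F /\ mem z Q) ->
  forall p, pi_op P O p <-> exists Q, mem Q F /\ pi_op P Q p.
Proof. apply HP. Qed.

Lemma pi_empty {E} : mem E tau -> (forall z, ~ mem z E) -> forall p, ~ pi_op P E p.
Proof. apply HP. Qed.

Lemma pi_whole p : pi_op P X p.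
Proof. apply HP. Qed.

Lemma pi_open {O} : mem O tau -> topo P (pi_op P O).
Proof. apply HP. Qed.

Lemma pi_basis {W} : topo P W -> forall p, W p ->
  exists O, mem O tau /\ pi_op P O p /\ forall q, pi_op P O q -> W q.
Proof. apply HP. Qed.

Lemma pi_point_ext a b : (forall O, mem O tau -> (pi_op P O a <-> pi_op P O b)) -> a = b.
Proof.
  intro Hab; apply NNPP; intro Hne.
  destruct (proj1 (proj2 HP) a b Hne) as [W [HW HWab]].
  destruct (classic (W a)) as [Wa | nWa].
  - destruct (pi_basis HW a Wa) as [O [HO [Oa OW]]].
    apply HWab; split; [intros _; apply OW, Hab; auto | auto].
  - destruct (classic (W b)) as [Wb | nWb]; [|tauto].
    destruct (pi_basis HW b Wb) as [O [HO [Ob OW]]].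
    exact (nWa (OW a (proj2 (Hab O HO) Ob))).
Qed.

Lemma continuous_into_pi {S : Type} (s : (S -> Prop) -> Prop) (g : S -> carrier P) :
  is_topology s ->
  (forall O, mem O tau -> forall r, pi_op P O (g r) ->
     exists A, s A /\ A r /\ forall r', A r' -> pi_op P O (g r')) ->
  continuous_map s (topo P) g.
Proof.
  intros Hs Hg W HW; apply open_of_locally_open; [exact Hs|]; intros r Wr.
  destruct (pi_basis HW (g r) Wr) as [O [HO [Or OW]]].
  destruct (Hg O HO r Or) as [A [HA [Ar AO]]].
  exists A; split; [exact HA|]; split; [exact Ar|]; intros r' Ar'; exact (OW _ (AO r' Ar')).
Qed.

Hypothesis HM : transitive_model_ZFC mem M.
Hypothesis HX : M_topology mem M X tau.

Lemma pi_pt_dense {W p} : topo P W -> W p -> exists x, mem x X /\ W (pi_pt P x).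
Proof.
  intros HW Wp.
  destruct (pi_basis HW p Wp) as [O [HO [Op OW]]].
  destruct (classic (exists x, mem x O)) as [[x xO] | Hempty].
  - pose proof (open_sub HX HO xO) as xX.
    exists x; split; [exact xX|]; apply OW, (pi_mem xX HO); exact xO.
  - exfalso; apply (pi_empty HO (fun z zO => Hempty (ex_intro _ z zO)) p Op).
Qed.

Lemma pi_disjoint {A B} : mem A tau -> mem B tau -> (forall z, ~ (mem z A /\ mem z B)) ->
  forall p, ~ (pi_op P A p /\ pi_op P B p).
Proof.
  intros HA HB Hdisj p.
  destruct HX as [_ [_ [_ [_ [_ [Hmeet _]]]]]].
  destruct (Hmeet A B HA HB) as [W [HW HWAB]].
  rewrite <- (pi_meet HA HB HW HWAB).
  apply (pi_empty HW); intros z zW; exact (Hdisj z (proj1 (HWAB z) zW)).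
Qed.

Lemma pi_cover2 {A B} : mem A tau -> mem B tau -> (forall z, mem z X -> mem z A \/ mem z B) ->
  forall p, pi_op P A p \/ pi_op P B p.
Proof.
  intros HA HB Hcov p.
  destruct (M_pair HM (open_M HM HX HA) (open_M HM HX HB)) as [s [Ms Hs]].
  assert (Hsub : forall Q, mem Q s -> mem Q tau) by (intros Q Qs; apply Hs in Qs as [-> | ->]; auto).
  assert (Hunion : forall z, mem z X <-> exists Q, mem Q s /\ mem z Q).
  { intro z; split.
    - intro zX; destruct (Hcov z zX) as [zA | zB];
        [exists A | exists B]; rewrite Hs; auto.
    - intros [Q [Qs zQ]]; exact (open_sub HX (Hsub Q Qs) zQ). }
  destruct HX as [_ [_ [_ [HXtau _]]]].
  destruct (proj1 (pi_join Ms Hsub HXtau Hunion p) (pi_whole p)) as [Q [Qs Qp]].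
  apply Hs in Qs as [-> | ->]; auto.
Qed.

Lemma pi_separate_open {O a b} : M_regular mem X tau -> mem O tau ->
  pi_op P O a -> ~ pi_op P O b ->
  exists A B, topo P A /\ topo P B /\ A a /\ B b /\ forall r, ~ (A r /\ B r).
Proof.
  intros HR HO Oa nOb.
  destruct (regular_core_family HM HX HR HO) as [F [MF [HF HFO]]].
  assert (Fsub : forall A, mem A F -> mem A tau) by (intros A AF; apply HF, AF).
  destruct (proj1 (pi_join MF Fsub HO HFO a) Oa) as [A [AF Aa]].
  destruct (proj2 (proj1 (HF A) AF)) as [B [HB [Hcov Hdisj]]].
  exists (pi_op P A), (pi_op P B).
  split; [exact (pi_open (Fsub A AF))|]; split; [exact (pi_open HB)|].
  split; [exact Aa|]; split; [|exact (pi_disjoint (Fsub A AF) HB Hdisj)].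
  destruct (pi_cover2 HO HB Hcov b); tauto.
Qed.

Lemma pi_hausdorff : M_regular mem X tau -> is_hausdorff (topo P).
Proof.
  intros HR a b Hne.
  assert (HO : exists O, mem O tau /\ ~ (pi_op P O a <-> pi_op P O b)).
  { apply NNPP; intro H; apply Hne, pi_point_ext; intros O HO.
    apply NNPP; intro H'; apply H; exists O; auto. }
  destruct HO as [O [HO Hab]].
  destruct (classic (pi_op P O a)) as [Oa | nOa].
  - apply (pi_separate_open HR HO Oa); tauto.
  - destruct (pi_separate_open (a := b) (b := a) HR HO) as [A [B [HA [HB [Ab [Ba Hdisj]]]]]];
      [tauto | exact nOa |].
    exists B, A; repeat split; auto; intros r [Br Ar]; exact (Hdisj r (conj Ar Br)).
Qed.

End Preinterpretation.

(** * Prime filters *)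

Section PrimeFilters.
Variables (U : Type) (mem : U -> U -> Prop) (M : U -> Prop) (X tau : U).

Record M_prime_filter (N : U -> Prop) : Prop := {
  filter_open : forall O, N O -> mem O tau;
  filter_whole : N X;
  filter_empty : forall E, mem E tau -> (forall z, ~ mem z E) -> ~ N E;
  filter_meet : forall O1 O2 W, mem O1 tau -> mem O2 tau -> mem W tau ->
    (forall z, mem z W <-> mem z O1 /\ mem z O2) -> (N W <-> N O1 /\ N O2);
  filter_join : forall F O, M F -> (forall Q, mem Q F -> mem Q tau) -> mem O tau ->
    (forall z, mem z O <-> exists Q, mem Q F /\ mem z Q) ->
    (N O <-> exists Q, mem Q F /\ N Q) }.

Definition prime_filter_point : Type := {N : U -> Prop | M_prime_filter N}.

Variable (P : Interp U).
Hypothesis HP : preinterpretation mem M X tau P.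
Hypothesis HX : M_topology mem M X tau.

Lemma nbhd_prime_filter r : M_prime_filter (fun O => mem O tau /\ pi_op P O r).
Proof.
  split.
  - intros O [HO _]; exact HO.
  - split; [apply HX | apply (pi_whole HP)].
  - intros E HE Hempty [_ Er]; exact (pi_empty HP HE Hempty r Er).
  - intros O1 O2 W H1 H2 HW HWO; rewrite (pi_meet HP H1 H2 HW HWO); tauto.
  - intros F O MF HF HO HFO; rewrite (pi_join HP MF HF HO HFO).
    split; [intros [_ [Q [QF Qr]]] | intros [Q [QF [_ Qr]]]]; eauto.
Qed.

(* Points of [X] are named through [P], so that [pi_pt] is total although the carrier may be empty. *)
Definition filter_space : Interp U := {|
  carrier := prime_filter_point;
  topo W := forall N, W N ->
    exists O, proj1_sig N O /\ forall N', proj1_sig N' O -> W N';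
  pi_pt x := exist _ _ (nbhd_prime_filter (pi_pt P x));
  pi_op O N := proj1_sig N O |}.


Lemma filter_space_topology : is_topology (topo filter_space).
Proof.
  destruct HX as [_ [_ [_ [HXtau [_ [Hmeet _]]]]]].
  split; [|split]; cbn.
  - intros N _; exists X; split; [exact (filter_whole (proj2_sig N)) | auto].
  - intros A B HA HB N [AN BN].
    destruct (HA N AN) as [O1 [NO1 H1]]; destruct (HB N BN) as [O2 [NO2 H2]].
    pose proof (filter_open (proj2_sig N) O1 NO1) as HO1.
    pose proof (filter_open (proj2_sig N) O2 NO2) as HO2.
    destruct (Hmeet O1 O2 HO1 HO2) as [W [HW HWO]].
    exists W; split; [apply (filter_meet (proj2_sig N) HO1 HO2 HW HWO); auto|].
    intros N' N'W; apply (filter_meet (proj2_sig N') HO1 HO2 HW HWO) in N'W as [? ?]; auto.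
  - intros F HF N [A [FA AN]].
    destruct (HF A FA N AN) as [O [NO HO]].
    exists O; split; [exact NO|]; intros N' N'O; exists A; auto.
Qed.

Lemma filter_space_T0 : is_T0 (topo filter_space).
Proof.
  intros N1 N2 Hne.
  assert (HO : exists O, ~ (proj1_sig N1 O <-> proj1_sig N2 O)).
  { apply NNPP; intro Hsame; apply Hne, eq_sig_hprop; [intros; apply proof_irrelevance|].
    apply functional_extensionality; intro O; apply propositional_extensionality.
    apply NNPP; intro H; apply Hsame; exists O; exact H. }
  destruct HO as [O HO]; exists (fun N => proj1_sig N O); split; [|exact HO].
  intros N NO; exists O; auto.
Qed.

Lemma filter_space_preinterpretation : preinterpretation mem M X tau filter_space.
Proof.
  split; [exact filter_space_topology|]; split; [exact filter_space_T0|].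
  split; [|split; [|split; [|split; [|split; [|split]]]]]; cbn.
  - intros x O xX HO; rewrite (pi_mem HP xX HO); tauto.
  - intros O1 O2 W H1 H2 HW HWO N; exact (filter_meet (proj2_sig N) H1 H2 HW HWO).
  - intros F O MF HF HO HFO N; exact (filter_join (proj2_sig N) MF HF HO HFO).
  - intros E HE Hempty N; exact (filter_empty (proj2_sig N) HE Hempty).
  - intros N; exact (filter_whole (proj2_sig N)).
  - intros O HO N NO; exists O; auto.
  - intros W HW N WN; destruct (HW N WN) as [O [NO OW]].
    exists O; split; [exact (filter_open (proj2_sig N) O NO)|]; auto.
Qed.

Lemma interpretation_realizes_filters :
  (forall Q, preinterpretation mem M X tau Q -> interp_le mem X tau Q P) ->
  exists h : prime_filter_point -> carrier P,
    forall N O, mem O tau -> (pi_op P O (h N) <-> proj1_sig N O).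
Proof.
  intro Hmax.
  destruct (Hmax filter_space filter_space_preinterpretation) as [h [_ Hh]].
  exists h; exact (fun N O HO => Hh O HO N).
Qed.

End PrimeFilters.

(** * Extending continuous maps *)

Section Extension.
Variables (U : Type) (mem : U -> U -> Prop) (M : U -> Prop).
Hypothesis HM : transitive_model_ZFC mem M.
Variables (X tau Y sigma f : U) (PX PY : Interp U).
Hypothesis HX : M_topology mem M X tau.
Hypothesis HY : M_topology mem M Y sigma.
Hypothesis Hf : M_continuous mem M f X tau Y sigma.
Hypothesis HPX : preinterpretation mem M X tau PX.
Hypothesis HPY : preinterpretation mem M Y sigma PY.

Definition interprets_preimages (fh : carrier PX -> carrier PY) : Prop :=
  forall O P, mem O tau -> mem P sigma -> preim_eq mem f X O P ->
    forall p, pi_op PY P (fh p) <-> pi_op PX O p.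

Definition preimage_filter (p : carrier PX) (P : U) : Prop :=
  mem P sigma /\ exists O, mem O tau /\ preim_eq mem f X O P /\ pi_op PX O p.

Lemma preimage_filter_iff {O P} p : mem O tau -> mem P sigma -> preim_eq mem f X O P ->
  (preimage_filter p P <-> pi_op PX O p).
Proof.
  intros HO HP HOP; split.
  - intros [_ [O' [HO' [HO'P O'p]]]].
    rewrite (preim_unique HM HX HO HO' HOP HO'P); exact O'p.
  - intro Op; split; [exact HP|]; exists O; auto.
Qed.

Lemma preimage_filter_join p F O : M F -> (forall Q, mem Q F -> mem Q sigma) -> mem O sigma ->
  (forall z, mem z O <-> exists Q, mem Q F /\ mem z Q) ->
  (preimage_filter p O <-> exists Q, mem Q F /\ preimage_filter p Q).
Proof.
  intros MF HF HO HFO.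
  destruct (preim_exists Hf HO) as [O' [HO' HO'O]].
  destruct (preimage_family HM HX HY Hf MF HF) as [G [MG HG]].
  assert (Gsub : forall O'', mem O'' G -> mem O'' tau) by (intros O'' H; apply HG, H).
  rewrite (preimage_filter_iff p HO' HO HO'O).
  rewrite (pi_join HPX MG Gsub HO' (preim_bigcup Hf HG HF HFO HO'O)); split.
  - intros [O'' [HGO'' O''p]]; destruct (proj1 (HG O'') HGO'') as [HO'' [Q [QF HO''Q]]].
    exists Q; split; [exact QF|]; apply (preimage_filter_iff p HO'' (HF Q QF) HO''Q); exact O''p.
  - intros [Q [QF [_ [O'' [HO'' [HO''Q O''p]]]]]].
    exists O''; split; [apply HG; eauto | exact O''p].
Qed.

Lemma preimage_filter_prime p : M_prime_filter mem M Y sigma (preimage_filter p).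
Proof.
  destruct HX as [_ [_ [_ [HXtau _]]]]; destruct HY as [_ [_ [_ [HYsigma _]]]].
  split.
  - intros P [HP _]; exact HP.
  - apply (preimage_filter_iff p HXtau HYsigma (preim_whole Hf)), (pi_whole HPX).
  - intros E HE Hempty.
    destruct (preim_exists Hf HE) as [O [HO HOE]].
    rewrite (preimage_filter_iff p HO HE HOE).
    exact (pi_empty HPX HO (preim_empty HOE Hempty) p).
  - intros P1 P2 W H1 H2 HW HWP.
    destruct (preim_exists Hf H1) as [O1 [HO1 HO1P]].
    destruct (preim_exists Hf H2) as [O2 [HO2 HO2P]].
    destruct (preim_exists Hf HW) as [W' [HW' HW'W]].
    rewrite (preimage_filter_iff p HO1 H1 HO1P), (preimage_filter_iff p HO2 H2 HO2P),
      (preimage_filter_iff p HW' HW HW'W).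
    exact (pi_meet HPX HO1 HO2 HW' (preim_meet Hf HO1P HO2P HW'W HWP) p).
  - intros F O MF HF HO HFO; exact (preimage_filter_join p MF HF HO HFO).
Qed.

Lemma extension_exists : (forall Q, preinterpretation mem M Y sigma Q -> interp_le mem Y sigma Q PY) ->
  exists fh, interprets_preimages fh.
Proof.
  intro Hmax.
  destruct (interpretation_realizes_filters HPY HY Hmax) as [h Hh].
  exists (fun p => h (exist _ _ (preimage_filter_prime p))).
  intros O P HO HP HOP p; rewrite (Hh _ P HP); exact (preimage_filter_iff p HO HP HOP).
Qed.

Variable (fh : carrier PX -> carrier PY).
Hypothesis Hfh : interprets_preimages fh.

Lemma extension_continuous : continuous_map (topo PX) (topo PY) fh.
Proof.
  apply (continuous_into_pi HPY); [exact (pi_topology HPX)|]; intros P HP p Pp.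
  destruct (preim_exists Hf HP) as [O [HO HOP]].
  exists (pi_op PX O); split; [exact (pi_open HPX HO)|]; split.
  - apply (Hfh HO HP HOP); exact Pp.
  - intros q Oq; apply (Hfh HO HP HOP); exact Oq.
Qed.

Lemma extension_extends x y : mem x X -> mem y Y -> fapp mem f x y ->
  fh (pi_pt PX x) = pi_pt PY y.
Proof.
  intros xX yY fxy; apply (pi_point_ext HPY); intros P HP.
  destruct (preim_exists Hf HP) as [O [HO HOP]].
  rewrite (Hfh HO HP HOP), <- (pi_mem HPX xX HO), <- (pi_mem HPY yY HP), (HOP x).
  destruct (f_value Hf xX) as [y0 [_ [_ Huniq]]]; split.
  - intros [_ [y' [fxy' y'P]]]; rewrite (Huniq y' fxy'), <- (Huniq y fxy) in y'P; exact y'P.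
  - intro yP; split; [exact xX|]; exists y; auto.
Qed.

Lemma extension_unique : M_regular mem Y sigma ->
  forall g : carrier PX -> carrier PY, continuous_map (topo PX) (topo PY) g ->
  (forall x y, mem x X -> mem y Y -> fapp mem f x y -> g (pi_pt PX x) = pi_pt PY y) ->
  g = fh.
Proof.
  intros HRY g Hg Hgext.
  apply (continuous_eq_on_dense (fun q => exists x, mem x X /\ q = pi_pt PX x)
           (pi_topology HPX) (pi_hausdorff HPY HM HY HRY) Hg extension_continuous).
  - intros W HW p Wp; destruct (pi_pt_dense HPX HX HW Wp) as [x [xX Wx]]; eauto.
  - intros d [x [xX ->]]; destruct (f_value Hf xX) as [y [yY [fxy _]]].
    rewrite (Hgext x y xX yY fxy); symmetry; exact (extension_extends xX yY fxy).
Qed.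

End Extension.

Theorem mainTheorem2 (U : Type) (mem : U -> U -> Prop) (M : U -> Prop)
  (X tau Y sigma f : U) (PX PY : Interp U) :
  transitive_model_ZFC mem M ->
  M_regular_hausdorff_space mem M X tau ->
  M_regular_hausdorff_space mem M Y sigma ->
  M_continuous mem M f X tau Y sigma ->
  interpretation mem M X tau PX ->
  interpretation mem M Y sigma PY ->
  exists fh : carrier PX -> carrier PY,
    (* (1) fh is continuous and extends {<pi x, chi y> : f(x) = y} *)
    (continuous_map (topo PX) (topo PY) fh /\
     (forall x y, mem x X -> mem y Y -> fapp mem f x y ->
        fh (pi_pt PX x) = pi_pt PY y)) /\
    (* ... and it is the unique such function *)
    (forall g : carrier PX -> carrier PY,
       continuous_map (topo PX) (topo PY) g ->
       (forall x y, mem x X -> mem y Y -> fapp mem f x y ->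
          g (pi_pt PX x) = pi_pt PY y) ->
       g = fh) /\
    (* (2) f^{-1} P = O  implies  fh^{-1} chi(P) = pi(O) *)
    (forall O P, mem O tau -> mem P sigma -> preim_eq mem f X O P ->
       forall p, pi_op PY P (fh p) <-> pi_op PX O p).
Proof.
  intros HM [HX _] [HY [_ HRY]] Hf [HPX _] [HPY Hmax].
  destruct (extension_exists HM HX HY Hf HPX HPY Hmax) as [fh Hfh].
  exists fh; split; [split|split].
  - exact (extension_continuous Hf HPX HPY Hfh).
  - exact (extension_extends Hf HPX HPY Hfh).
  - exact (extension_unique HM HX HY Hf HPX HPY Hfh HRY).
  - exact Hfh.
Qed.
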